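(* Let $k\geq 2$ and let $(\Sigma_k,\sigma)$ be the full one-sided shift on $k$ symbols. Then the set $Rec(\Sigma_k)\setminus BR(\Sigma_k)$ is dense in $\Sigma_k$ and contains an uncountable DC1-scrambled subset.
   Context: $\Sigma_k=\{0,1,\dots,k-1\}^{\mathbb{N}}$ with metric $d(x,y)=\sum_{n\ge1}\delta(x_n,y_n)/2^n$ (where $\delta(a,b)=0$ if $a=b$ and $1$ otherwise) and shift $\sigma(x_1x_2x_3\dots)=(x_2x_3\dots)$. For a point $x$ and open set $U$, $N(x,U)=\{n\ge1: \sigma^n(x)\in U\}$; $B_\varepsilon(x)$ is the open $\varepsilon$-ball. For $S\subseteq\mathbb{N}$, the Banach upper density is $B^*(S)=\limsup_{|I|\to\infty}|S\cap I|/|I|$ over finite intervals of consecutive integers $I$. A point $x$ is recurrent ($x\in Rec$) if $N(x,B_\varepsilon(x))\neq\emptyset$ for every $\varepsilon>0$, and Banach recurrent ($x\in BR$) if $B^*(N(x,B_\varepsilon(x)))>0$ for every $\varepsilon>0$. For $x,y$ and $t\in\mathbb{R}$, $\Phi^{(n)}_{xy}(t)=\frac1n|\{0\le i<n: d(\sigma^i x,\sigma^i y)<t\}|$, $\Phi_{xy}=\liminf_n\Phi^{(n)}_{xy}$, $\Phi^*_{xy}=\limsup_n\Phi^{(n)}_{xy}$. A pair $(x,y)$ is DC1 if $\Phi_{xy}(s)=0$ for some $s>0$ and $\Phi^*_{xy}(t)=1$ for all $t>0$; a set with at least two points is DC1-scrambled if every pair of distinct points in it is DC1. *)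

From Stdlib Require Import Reals ClassicalEpsilon.
From Coquelicot Require Import Coquelicot.
From mathcomp Require Import ssreflect ssrbool eqtype ssrnat fintype.

Set Implicit Arguments.
Unset Strict Implicit.

Local Open Scope R_scope.

(* Sigma_k: one-sided sequences; x n is the coordinate x_{n+1} of the paper. *)
Definition Sigma (k : nat) : Type := nat -> 'I_k.

Definition delta {k : nat} (a b : 'I_k) : R := if a == b then 0 else 1.

Definition dist {k : nat} (x y : Sigma k) : R :=
  Series (fun n => delta (x n) (y n) / 2 ^ (S n)).

Definition shift {k : nat} (x : Sigma k) : Sigma k := fun m => x (S m).
Definition shiftn {k : nat} (n : nat) (x : Sigma k) : Sigma k :=
  fun m => x (m + n)%nat.

Definition ball {k : nat} (x : Sigma k) (eps : R) : Sigma k -> Prop :=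
  fun y => dist x y < eps.

Definition Nset {k : nat} (x : Sigma k) (U : Sigma k -> Prop) : nat -> Prop :=
  fun n => (1 <= n)%nat /\ U (shiftn n x).

Definition ind (P : nat -> Prop) (i : nat) : nat :=
  if excluded_middle_informative (P i) then 1%nat else 0%nat.

Fixpoint count_int (P : nat -> Prop) (a m : nat) : nat :=
  match m with
  | O => O
  | S m' => (ind P (a + m') + count_int P a m')%nat
  end.

Definition sup_dens (P : nat -> Prop) (L : nat) : Rbar :=
  Lub_Rbar (fun r => exists a m : nat, (L <= m)%nat /\ (0 < m)%nat /\
                       r = INR (count_int P a m) / INR m).

Definition banach_upper (P : nat -> Prop) : Rbar :=
  Lim_seq (fun L => real (sup_dens P L)).

Definition Rec {k : nat} (x : Sigma k) : Prop :=
  forall eps, 0 < eps -> exists n, Nset x (ball x eps) n.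

Definition BR {k : nat} (x : Sigma k) : Prop :=
  forall eps, 0 < eps -> Rbar_lt (Rbar.Finite 0) (banach_upper (Nset x (ball x eps))).

Definition Phin {k : nat} (x y : Sigma k) (t : R) (n : nat) : R :=
  INR (count_int (fun i => dist (shiftn i x) (shiftn i y) < t) 0 n) / INR n.

Definition DC1_pair {k : nat} (x y : Sigma k) : Prop :=
  (exists s, 0 < s /\ LimInf_seq (Phin x y s) = Rbar.Finite 0) /\
  (forall t, 0 < t -> LimSup_seq (Phin x y t) = Rbar.Finite 1).

Definition DC1_scrambled {k : nat} (D : Sigma k -> Prop) : Prop :=
  (exists x y, D x /\ D y /\ x <> y) /\
  (forall x y, D x -> D y -> x <> y -> DC1_pair x y).

Definition uncountable {k : nat} (D : Sigma k -> Prop) : Prop :=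
  ~ (exists f : Sigma k -> nat,
       forall x y, D x -> D y -> f x = f y -> x = y).

Definition dense {k : nat} (A : Sigma k -> Prop) : Prop :=
  forall x eps, 0 < eps -> exists y, A y /\ dist x y < eps.

(* Each point is the limit of the blocks B_0 = w 1 1 and B_(j+1) = B_j F_j B_j, where the
   filler F_j has length (j+1)|B_j| and reads either 0 0 ... 0 or 0 1 0 1 ... 1 0.  Since B_j
   recurs at distance |B_j F_j|, the point is recurrent.  A close return of the point shows the
   word 1 1 at a fixed offset, and 1 1 occurs neither inside nor across a filler; hence all its
   occurrences lie in copies of B_0, a window of length |F_j| meets at most 2^j |B_0| <= |B_j|
   of them, and the return times have Banach density zero.
   The even fillers are constant, while F_(2m+1) alternates iff z i holds, for an enumeration
   m |-> i visiting every i infinitely often.  Two different codes thus disagree on infinitely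
   many fillers, along which the two points stay 1/4 apart for the fraction (j+1)/(j+2) of the
   times in [0, |B_j F_j|), whereas along the even fillers they agree: this gives
   lim inf Phi(1/4) = 0 and lim sup Phi(t) = 1.  Density comes from the free prefix w. *)

From Pilot Require Import Defs.
From Stdlib Require Import Reals Lra Lia ClassicalEpsilon Classical FunctionalExtensionality.
From Coquelicot Require Import Coquelicot.
From mathcomp Require Import ssreflect ssrfun ssrbool eqtype ssrnat fintype.
From mathcomp Require Import div zify.
(* Re-imported so that [dist] and [ball] refer to [Defs], not to Stdlib and Coquelicot. *)
Import Defs.

Local Open Scope R_scope.

Lemma dist_term_bounds {k} (a b : 'I_k) n :
  0 <= delta a b / 2 ^ S n <= (/ 2) ^ S n.
Proof.
  have hp : 0 < / 2 ^ S n by apply/Rinv_0_lt_compat/pow_lt; lra.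
  rewrite pow_inv /delta /Rdiv; case: (a == b); lra.
Qed.

Lemma ex_series_dist {k} (x y : Sigma k) :
  ex_series (fun n => delta (x n) (y n) / 2 ^ S n).
Proof.
  apply: (ex_series_le _ (fun n => (/ 2) ^ S n)).
  - move=> n; have h := dist_term_bounds (x n) (y n) n.
    rewrite /norm /= /abs /= Rabs_pos_eq; simpl in h; lra.
  - apply: ex_series_scal_l (/ 2) _ _; exists (/ (1 - / 2)).
    apply: is_series_geom; rewrite Rabs_pos_eq; lra.
Qed.

Lemma dist_ge_of_neq {k} (x y : Sigma k) i : x i <> y i -> / 2 ^ S i <= dist x y.
Proof.
  move=> hxy; set a := fun n => delta (x n) (y n) / 2 ^ S n.
  have a_ge0 n : 0 <= a n by rewrite /a; have := dist_term_bounds (x n) (y n) n; lra.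
  have ai : a i = / 2 ^ S i.
    by rewrite /a /delta; case: eqP => // _; rewrite /Rdiv Rmult_1_l.
  have a_le_sum j : a j <= sum_f_R0 a j.
    by case: j => [|j] /=; [lra | have := cond_pos_sum a j a_ge0; lra].
  rewrite -ai; apply: Rle_trans (a_le_sum i) _; apply: sum_incr a_ge0.
  exact/is_series_Reals/Series_correct/ex_series_dist.
Qed.

Lemma dist_le_of_agree {k} (x y : Sigma k) T :
  (forall i, (i < T)%nat -> x i = y i) -> dist x y <= / 2 ^ T.
Proof.
  move=> hxy; rewrite /dist (Series_incr_n_aux _ T); last first.
    by move=> i hi; rewrite hxy; [rewrite /delta eqxx /Rdiv Rmult_0_l | lia].
  apply: Rle_trans (Series_le _ (fun n => (/ 2) ^ S T * (/ 2) ^ n) _ _) _.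
  - move=> n; rewrite -pow_add; have -> : (S T + n = S (T + n))%coq_nat by lia.
    exact: dist_term_bounds.
  - apply: ex_series_scal_l; exists (/ (1 - / 2)).
    apply: is_series_geom; rewrite Rabs_pos_eq; lra.
  - rewrite Series_scal_l Series_geom ?Rabs_pos_eq; try lra.
    rewrite pow_inv /=.
    have : 0 < 2 ^ T by apply: pow_lt; lra.
    move=> h; right; field; lra.
Qed.

Lemma agree_of_dist_lt {k} (x y : Sigma k) T :
  dist x y < / 2 ^ T -> forall i, (i < T)%nat -> x i = y i.
Proof.
  move=> hxy i hi; apply: NNPP => hne.
  have := dist_ge_of_neq x y i hne.
  have : / 2 ^ T <= / 2 ^ S i.
    apply: Rinv_le_contravar; first by apply: pow_lt; lra.
    apply: Rle_pow; [lra | lia].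
  lra.
Qed.

Lemma exists_inv_pow2_lt eps : 0 < eps -> exists T, / 2 ^ T < eps.
Proof.
  move=> heps; have hgeom : is_lim_seq (fun n => (/ 2) ^ n) 0.
    by apply: is_lim_seq_geom; rewrite Rabs_pos_eq; lra.
  have [T hT] := proj2 (is_lim_seq_spec _ _) hgeom (mkposreal eps heps).
  exists T; have := hT T (Nat.le_refl T).
  by rewrite Rminus_0_r Rabs_pos_eq -?pow_inv //; apply: pow_le; lra.
Qed.

Section Counting.
Local Open Scope nat_scope.
Implicit Types P Q : nat -> Prop.

Lemma ind_le1 P i : ind P i <= 1.
Proof. by rewrite /ind; case: excluded_middle_informative. Qed.

Lemma ind_true P i : P i -> ind P i = 1.
Proof. by rewrite /ind; case: excluded_middle_informative. Qed.

Lemma ind_false P i : ~ P i -> ind P i = 0.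
Proof. by rewrite /ind; case: excluded_middle_informative. Qed.

Lemma count_int_le P a m : count_int P a m <= m.
Proof. by elim: m => [|m IH] //=; have := ind_le1 P (a + m); lia. Qed.

Lemma count_int_add P a m1 m2 :
  count_int P a (m1 + m2) = count_int P a m1 + count_int P (a + m1) m2.
Proof.
  elim: m2 => [|m2 IH] /=; first by rewrite !addn0.
  by rewrite addnS /= IH [a + (m1 + m2)]addnA; lia.
Qed.

Lemma count_int_mono P Q a b m :
  (forall r, r < m -> P (a + r) -> Q (b + r)) -> count_int P a m <= count_int Q b m.
Proof.
  elim: m => [|m IH] hPQ //=.
  have := IH (fun r hr => hPQ r (ltnW hr)).
  rewrite /ind; case: excluded_middle_informative => hP;
    case: excluded_middle_informative => hQ //=; try lia.
  by case: hQ; apply: hPQ.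
Qed.

Lemma count_int_eq P Q a b m :
  (forall r, r < m -> P (a + r) <-> Q (b + r)) -> count_int P a m = count_int Q b m.
Proof.
  move=> hPQ; apply/eqP; rewrite eqn_leq.
  by apply/andP; split; apply: count_int_mono => r hr; case: (hPQ r hr).
Qed.

Lemma count_int0 P a m : (forall r, r < m -> ~ P (a + r)) -> count_int P a m = 0.
Proof.
  elim: m => [|m IH] hP //=; rewrite ind_false; last exact: hP.
  by rewrite IH // => r hr; apply: hP; apply: ltnW.
Qed.

Lemma count_int_full P a m : (forall r, r < m -> P (a + r)) -> count_int P a m = m.
Proof.
  elim: m => [|m IH] hP //=; rewrite ind_true; last exact: hP.
  by rewrite IH // => r hr; apply: hP; apply: ltnW.
Qed.

Lemma count_int_le_prefix P b m n : b + m <= n -> count_int P b m <= count_int P 0 n.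
Proof.
  move=> hn; rewrite -(subnKC hn) !count_int_add add0n; lia.
Qed.

Lemma count_int_le_div P l C :
  0 < l -> (forall b m, m <= l -> count_int P b m <= C) ->
  forall b M, count_int P b M <= (M %/ l).+1 * C.
Proof.
  move=> l_gt0 hC.
  have blocks q : forall b r, r <= l -> count_int P b (q * l + r) <= q.+1 * C.
    elim: q => [|q IH] b r hr; first by rewrite mul0n mul1n; apply: hC.
    rewrite mulSn -addnA count_int_add (mulSn q.+1).
    exact: leq_add (hC _ _ (leqnn l)) (IH _ _ hr).
  move=> b M; rewrite {1}(divn_eq M l); apply: blocks.
  exact/ltnW/ltn_pmod.
Qed.

End Counting.

Lemma ratio_lt_of_mul_le eps : 0 < eps -> exists q0,
  forall c n q, (q0 <= q)%nat -> (0 < n)%nat -> (c * q <= 2 * n)%nat ->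
  INR c / INR n < eps.
Proof.
  move=> heps; have [q0 hq0] := proj2 (is_lim_seq_spec _ _) is_lim_seq_INR (2 / eps).
  exists q0 => c n q hq hn hcq.
  have q_large : 2 / eps < INR q.
    by apply: Rlt_le_trans (hq0 q0 (le_n q0)) _; apply: le_INR; lia.
  have n_pos : 0 < INR n by apply: lt_0_INR; lia.
  have two_lt : 2 < eps * INR q.
    by move: q_large; rewrite Rlt_div_l //; lra.
  have hcq_R : INR c * INR q <= 2 * INR n.
    by rewrite -mult_INR -[2]/(INR 2) -mult_INR; apply: le_INR; lia.
  have q_pos : 0 < INR q by nra.
  apply/Rlt_div_l => //; apply: (Rmult_lt_reg_r (INR q)) => //; nra.
Qed.

Lemma banach_upper_le_0 (P : nat -> Prop) :
  (forall eps, 0 < eps -> exists L0, forall a m, (L0 <= m)%nat -> (0 < m)%nat ->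
     INR (count_int P a m) / INR m < eps) ->
  Rbar_le (banach_upper P) 0.
Proof.
  move=> hsmall.
  have le_eps eps : 0 < eps -> Rbar_le (banach_upper P) eps.
    move=> heps; have [L0 hL0] := hsmall eps heps; rewrite /banach_upper -(Lim_seq_const eps).
    apply: Lim_seq_le_loc; exists L0 => L hL; rewrite /sup_dens.
    set E := fun r => _; have [_ lub_le] := Lub_Rbar_correct E.
    have : Rbar_le (Lub_Rbar E) eps.
      apply: lub_le => _ [a [m [hm [m_pos ->]]]]; apply/Rlt_le/hL0 => //; lia.
    by case: (Lub_Rbar E) => [r | | ] //= _; apply: Rlt_le.
  case e : (banach_upper P) => [x | | ] //=.
  - apply: Rnot_lt_le => x_pos; have := le_eps (x / 2) ltac:(lra); rewrite e /=; lra.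
  - by have := le_eps 1 Rlt_0_1; rewrite e.
Qed.

Lemma LimInf_seq_eq_0 (u : nat -> R) : (forall n, 0 <= u n) ->
  (forall eps, 0 < eps -> forall N, exists n, (N <= n)%nat /\ u n < eps) ->
  LimInf_seq u = 0.
Proof.
  move=> u_ge0 hu; apply: is_LimInf_seq_unique => eps; split.
  - move=> N; have [n [hn hun]] := hu eps (cond_pos eps) N.
    by exists n; split; [apply/leP | rewrite Rplus_0_l].
  - by exists 0%nat => n _; have := u_ge0 n; have := cond_pos eps; lra.
Qed.

Lemma LimSup_seq_eq_1 (u : nat -> R) : (forall n, u n <= 1) ->
  (forall eps, 0 < eps -> forall N, exists n, (N <= n)%nat /\ 1 - eps < u n) ->
  LimSup_seq u = 1.
Proof.
  move=> u_le1 hu; apply: is_LimSup_seq_unique => eps; split.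
  - move=> N; have [n [hn hun]] := hu eps (cond_pos eps) N.
    by exists n; split; [apply/leP | ].
  - by exists 0%nat => n _; have := u_le1 n; have := cond_pos eps; lra.
Qed.

Lemma Phin_bounds {k} (x y : Sigma k) t n : 0 <= Phin x y t n <= 1.
Proof.
  rewrite /Phin; case: n => [|n]; first by rewrite /= /Rdiv Rinv_0 Rmult_0_r; lra.
  set c := count_int _ 0 n.+1.
  have n_pos : 0 < INR n.+1 by apply: lt_0_INR; lia.
  have c_le : INR c <= INR n.+1 by apply/le_INR/leP/count_int_le.
  split; first by apply: Rdiv_le_0_compat; [apply: pos_INR | done].
  by apply/Rle_div_l => //; lra.
Qed.

Section Construction.
Context {k : nat} (zero one : 'I_k).
Hypothesis zero_neq_one : zero <> one.
Variables (N : nat) (w : Sigma k).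
Local Open Scope nat_scope.

Fixpoint block_len j := if j is j'.+1 then (j' + 3) * block_len j' else N + 2.
Definition filler_len j := j.+1 * block_len j.
Definition copy_start j := block_len j + filler_len j.

Definition base (n : nat) : 'I_k := if n < N then w n else one.
Definition diag_index (m : nat) : nat := m - Nat.sqrt m ^ 2.

Lemma copy_startE j : copy_start j = (j + 2) * block_len j.
Proof. rewrite /copy_start /filler_len; lia. Qed.

Lemma block_lenS j : block_len j.+1 = copy_start j + block_len j.
Proof. rewrite copy_startE /=; lia. Qed.

Lemma block_len_ge j : j + 2 <= block_len j.
Proof. by elim: j => [|j IH] /=; lia. Qed.

Lemma leq_block_len : {homo block_len : j j' / j <= j'}.
Proof.
  move=> j j'; elim: j' => [|j' IH]; first by rewrite leqn0 => /eqP ->.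
  rewrite leq_eqVlt ltnS => /orP[/eqP -> // | /IH]; rewrite block_lenS; lia.
Qed.

Lemma block_len_pow j : 2 ^ j * block_len 0 <= block_len j.
Proof.
  elim: j => [|j IH]; first by rewrite mul1n.
  rewrite expnS -mulnA /=; apply: leq_trans _ (leq_mul (leqnn 2) IH) _.
  by apply: leq_mul; [lia | ].
Qed.

Lemma block_len_lt_copy_start j : block_len j < copy_start j.
Proof. by rewrite /copy_start /filler_len; have := block_len_ge j; nia. Qed.

Lemma copy_start_gt j : j < copy_start j.
Proof. by rewrite copy_startE; have := block_len_ge j; nia. Qed.

Lemma leq_filler_len : {homo filler_len : j j' / j <= j'}.
Proof. by move=> j j' hj; apply: leq_mul; [rewrite ltnS | apply: leq_block_len]. Qed.

Lemma exists_diag_index i M : exists m, M <= m /\ diag_index m = i.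
Proof.
  exists ((M + i) * (M + i) + i); split; first nia.
  rewrite /diag_index (Nat.sqrt_unique _ (M + i)); last by split; nia.
  rewrite -mulnn; lia.
Qed.

Section Code.
Variable z : nat -> bool.

Definition filler_on (j : nat) : bool := odd j && z (diag_index j./2).

Definition filler (j n : nat) : 'I_k :=
  if [&& filler_on j, odd (n - block_len j) & n.+1 < copy_start j] then one else zero.

(* [stage j] begins with the block B_j, of length [block_len j]; [coded] is their limit. *)
Fixpoint stage (j : nat) : Sigma k :=
  if j is j'.+1 then fun n =>
    if n < block_len j' then stage j' n
    else if n < copy_start j' then filler j' n
    else stage j' (n - copy_start j')
  else base.

Definition coded : Sigma k := fun n => stage n n.

Lemma filler_on_odd m : filler_on (2 * m).+1 = z (diag_index m).
Proof. by rewrite /filler_on mul2n /= odd_double uphalf_double. Qed.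

Lemma filler_on_even m : filler_on (2 * m) = false.
Proof. by rewrite /filler_on mul2n odd_double. Qed.

Lemma stage_stable j j' n : n < block_len j -> j <= j' -> stage j' n = stage j n.
Proof.
  move=> hn; elim: j' => [|j' IH]; first by rewrite leqn0 => /eqP ->.
  rewrite leq_eqVlt ltnS => /orP[/eqP -> // | hj].
  by rewrite /= ifT ?IH //; exact: leq_trans hn (leq_block_len _ _ hj).
Qed.

Lemma coded_stage j n : n < block_len j -> coded n = stage j n.
Proof.
  move=> hn; have := block_len_ge n; rewrite /coded.
  case: (leqP j n) => hj hlen; first exact: stage_stable.
  by symmetry; apply: stage_stable; [lia | exact: ltnW].
Qed.

Lemma coded_base n : n < block_len 0 -> coded n = base n.
Proof. exact: coded_stage. Qed.

Lemma coded_filler j n : block_len j <= n -> n < copy_start j -> coded n = filler j n.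
Proof.
  move=> h1 h2; rewrite (coded_stage j.+1) ?block_lenS; last lia.
  by rewrite /= ltnNge h1 h2.
Qed.

Lemma coded_copy j n : n < block_len j -> coded (copy_start j + n) = coded n.
Proof.
  move=> hn; rewrite (coded_stage j.+1) ?block_lenS; last lia.
  rewrite /= ifF; last by rewrite /copy_start; lia.
  by rewrite ifF ?addKn -?coded_stage //; lia.
Qed.

Lemma coded_Rec : Rec coded.
Proof.
  move=> eps heps; have [T hT] := exists_inv_pow2_lt _ heps.
  exists (copy_start T); split; first exact: leq_ltn_trans (copy_start_gt T).
  apply: Rle_lt_trans hT; apply: Rle_trans (dist_le_of_agree _ _ (block_len T) _) _.
    by move=> i hi; rewrite /shiftn addnC coded_copy.
  apply: Rinv_le_contravar; first by apply: pow_lt; lra.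
  by apply: Rle_pow; [lra | have := block_len_ge T; lia].
Qed.

Lemma dist_coded_le : (dist w coded <= / 2 ^ N)%R.
Proof.
  apply: dist_le_of_agree => i hi.
  by rewrite coded_base /base ?hi //=; lia.
Qed.

Definition one_pair (q : nat) : Prop := coded q = one /\ coded q.+1 = one.

Lemma filler_start j : filler j (block_len j) = zero.
Proof. by rewrite /filler subnn andbF. Qed.

Lemma not_one_pair_filler j q : block_len j <= q.+1 -> q < copy_start j -> ~ one_pair q.
Proof.
  move=> h1 h2 [q_one qS_one]; have := block_len_lt_copy_start j.
  case: (ltnP q (block_len j)) => hq hlen.
    have eq_q : q.+1 = block_len j by lia.
    by move: qS_one; rewrite eq_q (coded_filler j) ?filler_start.
  move: q_one; rewrite (coded_filler j) // /filler.
  case: (ltnP q.+1 (copy_start j)) => hqS; rewrite ?andbF; last exact: zero_neq_one.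
  move: qS_one; rewrite (coded_filler j) // /filler subSn // oddS.
  by case: (filler_on j); case: (odd _) => /= *; apply: zero_neq_one.
Qed.

Lemma coded_block_len j : coded (block_len j) = zero.
Proof. by rewrite (coded_filler j) ?filler_start ?block_len_lt_copy_start. Qed.

Lemma one_pair_copy j r : r < block_len j -> one_pair (copy_start j + r) <-> one_pair r.
Proof.
  move=> hr; case: (ltnP r.+1 (block_len j)) => hrS.
    by rewrite /one_pair -addnS !coded_copy.
  have eq_r : r.+1 = block_len j by lia.
  split=> [[_] | hpair]; first by rewrite -addnS eq_r -block_lenS coded_block_len => /zero_neq_one.
  have r_lt : r < copy_start j := ltn_trans hr (block_len_lt_copy_start j).
  by case: (not_one_pair_filler j r _ r_lt hpair); rewrite eq_r.
Qed.

Lemma count_one_pair_copy j c m :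
  c + m <= block_len j -> count_int one_pair (copy_start j + c) m = count_int one_pair c m.
Proof. by move=> hcm; apply: count_int_eq => r hr; rewrite -addnA one_pair_copy //; lia. Qed.

Lemma count_one_pair_filler j c m :
  block_len j <= c -> c + m <= copy_start j -> count_int one_pair c m = 0.
Proof. by move=> h1 h2; apply: count_int0 => r hr; apply: (not_one_pair_filler j); lia. Qed.

Lemma count_one_pair_block j : count_int one_pair 0 (block_len j) <= 2 ^ j * block_len 0.
Proof.
  elim: j => [|j IH]; first by rewrite mul1n count_int_le.
  rewrite block_lenS {1}/copy_start (count_int_add _ _ (_ + _)) count_int_add !add0n.
  rewrite (count_one_pair_filler j (block_len j) (filler_len j)) //.
  by rewrite -/(copy_start j) -[copy_start j]addn0 count_one_pair_copy // expnS; lia.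
Qed.

Lemma count_one_pair_head j b m : b <= block_len j <= b + m -> b + m <= copy_start j ->
  count_int one_pair b m = count_int one_pair b (block_len j - b).
Proof.
  move=> /andP[h1 h2] h3; have -> : m = (block_len j - b) + (b + m - block_len j) by lia.
  by rewrite count_int_add (subnKC h1) (count_one_pair_filler j (block_len j)) ?addn0 //; lia.
Qed.

Lemma count_one_pair_tail j b m : block_len j <= b <= copy_start j ->
  copy_start j <= b + m <= block_len j.+1 ->
  count_int one_pair b m = count_int one_pair 0 (b + m - copy_start j).
Proof.
  rewrite block_lenS => /andP[h1 h2] /andP[h3 h4].
  rewrite {1}(_ : m = (copy_start j - b) + (b + m - copy_start j)); last lia.
  rewrite count_int_add (count_one_pair_filler j) ?(subnKC h2) //.
  by rewrite -{1}[copy_start j]addn0 count_one_pair_copy //; lia.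
Qed.

Lemma count_one_pair_window j J b m : j <= J -> b + m <= block_len J -> m <= filler_len j ->
  count_int one_pair b m <= 2 ^ j * block_len 0.
Proof.
  elim: J b m => [|J IH] b m hjJ hbm hm.
    by move: hjJ; rewrite leqn0 => /eqP ->; rewrite mul1n; have := count_int_le one_pair b m; lia.
  case: (ltnP J j) => hJj.
    have -> : j = J.+1 by lia.
    exact: leq_trans (count_int_le_prefix _ _ _ _ hbm) (count_one_pair_block J.+1).
  have hmJ := leq_trans hm (leq_filler_len _ _ hJj).
  have hcs : copy_start J = block_len J + filler_len J by [].
  rewrite block_lenS in hbm.
  case: (leqP (b + m) (block_len J)) => h1; first exact: IH.
  case: (leqP (copy_start J) b) => h2.
    by rewrite -(subnKC h2) count_one_pair_copy; [apply: IH | ]; lia.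
  case: (leqP b (block_len J)) => h3.
    by rewrite (count_one_pair_head J); [apply: IH | apply/andP; split | ]; lia.
  case: (leqP (b + m) (copy_start J)) => h4.
    by rewrite (count_one_pair_filler J) //; lia.
  rewrite (count_one_pair_tail J); first by apply: IH; lia.
  all: by apply/andP; split; rewrite ?block_lenS; lia.
Qed.

Lemma count_one_pair_short j b m : m <= filler_len j ->
  count_int one_pair b m <= 2 ^ j * block_len 0.
Proof.
  apply: (count_one_pair_window j (j + b + m)); first lia.
  by have := block_len_ge (j + b + m); lia.
Qed.

Lemma count_one_pair_long j b m : filler_len j <= m ->
  count_int one_pair b m * j.+1 <= 2 * m.
Proof.
  move=> hm; set l := filler_len j; set q := m %/ l.
  have l_pos : 0 < l by rewrite /l /filler_len muln_gt0 /=; have := block_len_ge j; lia.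
  have q_pos : 0 < q by rewrite divn_gt0.
  have hql : q * l <= m := leq_divM m l.
  have hcount := count_int_le_div _ _ _ l_pos (count_one_pair_short j) b m.
  have hC := block_len_pow j.
  rewrite -/q in hcount; rewrite /l /filler_len in hql.
  have hq2 : q.+1 <= 2 * q by lia.
  have := leq_mul hcount (leqnn j.+1).
  have := leq_mul (leq_mul hq2 hC) (leqnn j.+1).
  nia.
Qed.

Lemma one_pair_of_return p :
  Nset coded (ball coded (/ 2 ^ (N + 2))) p -> one_pair (p + N).
Proof.
  move=> [_ hdist]; have agree := agree_of_dist_lt _ _ _ hdist.
  have base_one i : N <= i < N + 2 -> coded i = one.
    by move=> /andP[h1 h2]; rewrite coded_base // /base ltnNge h1.
  split; [rewrite addnC -(base_one N) | rewrite -addnS addnC -(base_one N.+1)].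
  all: by rewrite ?(agree N) ?(agree N.+1) //; lia.
Qed.

Lemma coded_not_BR : ~ BR coded.
Proof.
  move=> hBR; have r_pos : (0 < / 2 ^ (N + 2))%R by apply/Rinv_0_lt_compat/pow_lt; lra.
  apply: (Rbar_le_not_lt _ _ _ (hBR _ r_pos)); apply: banach_upper_le_0 => eps heps.
  have [q0 hq0] := ratio_lt_of_mul_le eps heps.
  exists (filler_len q0) => a m hm m_pos; apply: (hq0 _ _ q0.+1) => //.
  apply: leq_trans _ (count_one_pair_long q0 (a + N) m hm).
  apply: leq_mul (leqnn _); apply: count_int_mono => r _ /one_pair_of_return.
  by rewrite addnAC.
Qed.

Lemma coded_Rec_not_BR : Rec coded /\ ~ BR coded.
Proof. exact: conj coded_Rec coded_not_BR. Qed.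

End Code.

Section Pair.
Variables z1 z2 : nat -> bool.
Let close (t : R) (i : nat) := (dist (shiftn i (coded z1)) (shiftn i (coded z2)) < t)%R.

Lemma exists_differing_filler : z1 <> z2 ->
  forall M, exists j, M <= j /\ filler_on z1 j <> filler_on z2 j.
Proof.
  move=> hz M; have [i hi] : exists i, z1 i <> z2 i.
    apply: NNPP => hall; apply: hz; apply: functional_extensionality => i.
    by apply: NNPP => hi; apply: hall; exists i.
  have [m [hm hdiag]] := exists_diag_index i M.
  by exists (2 * m).+1; rewrite !filler_on_odd hdiag; split; first lia.
Qed.

Lemma not_close_filler j i : filler_on z1 j <> filler_on z2 j ->
  block_len j <= i -> i + 2 < copy_start j -> ~ close (/ 2 ^ 2) i.
Proof.
  move=> hon h1 h2 /agree_of_dist_lt agree.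
  pose q := if odd (i - block_len j) then i else i.+1.
  have hq : i <= q <= i.+1 by rewrite /q; case: ifP; lia.
  have odd_q : odd (q - block_len j).
    by rewrite /q; case: ifP => // /negbT; rewrite subSn // oddS.
  have := agree (q - i) ltac:(lia); rewrite /shiftn subnK; last lia.
  rewrite !(coded_filler _ j) /filler ?odd_q; try lia.
  rewrite (_ : q.+1 < copy_start j); last lia.
  by move: hon; case: (filler_on z1 j); case: (filler_on z2 j) => //= _ /esym.
Qed.

Lemma close_filler j i T : ~~ filler_on z1 j -> ~~ filler_on z2 j ->
  block_len j <= i -> i + T <= copy_start j ->
  (dist (shiftn i (coded z1)) (shiftn i (coded z2)) <= / 2 ^ T)%R.
Proof.
  move=> off1 off2 h1 h2; apply: dist_le_of_agree => r hr.
  by rewrite /shiftn !(coded_filler _ j) /filler ?(negbTE off1) ?(negbTE off2) //; lia.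
Qed.

Lemma count_close_differ j : filler_on z1 j <> filler_on z2 j ->
  count_int (close (/ 2 ^ 2)) 0 (copy_start j) * (j + 2) <= 2 * copy_start j.
Proof.
  move=> hon; have := block_len_ge j; rewrite copy_startE => hlen.
  rewrite -copy_startE {1}(_ : copy_start j = block_len j + (filler_len j - 2) + 2); last first.
    by rewrite /copy_start /filler_len; nia.
  rewrite !count_int_add (count_int0 _ (0 + block_len j)) => [|r hr]; last first.
    by apply: (not_close_filler j) => //; rewrite /copy_start; lia.
  have := count_int_le (close (/ 2 ^ 2)) 0 (block_len j).
  have := count_int_le (close (/ 2 ^ 2)) (0 + (block_len j + (filler_len j - 2))) 2.
  rewrite copy_startE; nia.
Qed.

Lemma count_close_equal j T t : ~~ filler_on z1 j -> ~~ filler_on z2 j ->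
  (/ 2 ^ T < t)%R -> T <= block_len j ->
  (copy_start j - count_int (close t) 0 (copy_start j)) * (j + 2) <= 2 * copy_start j.
Proof.
  move=> off1 off2 hT hTL; have hlen := block_len_ge j.
  have hF : block_len j <= filler_len j by rewrite /filler_len leq_pmull.
  have hmid : count_int (close t) (block_len j) (filler_len j - T) = filler_len j - T.
    apply: count_int_full => r hr; apply: Rle_lt_trans hT.
    by apply: (close_filler j) => //; rewrite /copy_start; lia.
  set c := count_int (close t) 0 (copy_start j).
  have hc : filler_len j - T <= c.
    by rewrite -hmid; apply: count_int_le_prefix; rewrite /copy_start; lia.
  have : copy_start j - c <= 2 * block_len j by rewrite /copy_start; lia.
  by move/leq_mul=> /(_ _ _ (leqnn (j + 2))); rewrite copy_startE; lia.
Qed.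

Lemma LimInf_Phin_coded :
  z1 <> z2 -> LimInf_seq (Phin (coded z1) (coded z2) (/ 2 ^ 2)%R) = 0%R.
Proof.
  move=> hz; apply: LimInf_seq_eq_0 => [n | eps heps M]; first exact: proj1 (Phin_bounds _ _ _ _).
  have [q0 hq0] := ratio_lt_of_mul_le eps heps.
  have [j [hj hon]] := exists_differing_filler hz (M + q0).
  exists (copy_start j); split; first by have := copy_start_gt j; lia.
  apply: (hq0 _ _ (j + 2)); [lia | exact: leq_ltn_trans (copy_start_gt j) | ].
  exact: count_close_differ.
Qed.

Lemma LimSup_Phin_coded t : (0 < t)%R -> LimSup_seq (Phin (coded z1) (coded z2) t) = 1%R.
Proof.
  move=> ht; apply: LimSup_seq_eq_1 => [n | eps heps M]; first exact: proj2 (Phin_bounds _ _ _ _).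
  have [T hT] := exists_inv_pow2_lt t ht.
  have [q0 hq0] := ratio_lt_of_mul_le eps heps.
  set j := 2 * (M + q0 + T); have hj : M + q0 + T <= j by rewrite /j; lia.
  have := block_len_ge j => hlen.
  have := count_close_equal j T t; rewrite !filler_on_even => /(_ isT isT hT ltac:(lia)).
  have cs_pos : 0 < copy_start j := leq_ltn_trans (leq0n j) (copy_start_gt j).
  move=> /(hq0 _ _ (j + 2) ltac:(lia) cs_pos); set c := count_int _ _ _ => hratio.
  exists (copy_start j); split; first by have := copy_start_gt j; lia.
  have c_le : (c <= copy_start j)%coq_nat by apply/leP/count_int_le.
  have n_pos : (0 < INR (copy_start j))%R by apply/lt_0_INR/leP.
  move: hratio; rewrite /Phin -/c (minus_INR _ _ c_le) /Rdiv Rmult_minus_distr_r Rinv_r; lra.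
Qed.

Lemma coded_DC1 : z1 <> z2 -> DC1_pair (coded z1) (coded z2).
Proof.
  move=> hz; split; last by move=> t /LimSup_Phin_coded.
  exists (/ 2 ^ 2)%R; split; last exact: LimInf_Phin_coded.
  by apply/Rinv_0_lt_compat/pow_lt; lra.
Qed.

Lemma coded_neq : z1 <> z2 -> coded z1 <> coded z2.
Proof.
  move=> /exists_differing_filler/(_ 1) [j [hj hon]] heq.
  have hlen := block_len_ge j.
  apply: (not_close_filler j (block_len j) hon (leqnn _)); first by rewrite copy_startE; nia.
  rewrite /close heq; apply: Rle_lt_trans (dist_le_of_agree _ _ 3 _) _ => //=; lra.
Qed.

End Pair.

Lemma coded_inj : injective coded.
Proof. by move=> z1 z2 heq; apply: NNPP => /coded_neq. Qed.

End Construction.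

Lemma bool_seq_not_inj_nat (g : (nat -> bool) -> nat) : ~ injective g.
Proof.
  move=> g_inj.
  pose h n := epsilon (inhabits (fun _ => false)) (fun z => g z = n).
  have hK z : h (g z) = z.
    by apply: g_inj; apply: (epsilon_spec _ (fun y => g y = g z)); exists z.
  pose d n := ~~ h n n.
  by have := f_equal (fun f => f (g d)) (hK d); rewrite /d; case: (h _ _).
Qed.

Lemma uncountable_inj_image {k} (f : (nat -> bool) -> Sigma k) :
  injective f -> uncountable (fun x => exists z, x = f z).
Proof.
  move=> f_inj [c hc]; apply: (bool_seq_not_inj_nat (fun z => c (f z))) => z1 z2 e.
  by apply/f_inj/hc => //; [exists z1 | exists z2].
Qed.

Lemma exists_two_symbols {k} : (2 <= k)%nat -> exists zero one : 'I_k, zero <> one.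
Proof.
  move=> hk; exists (Ordinal (ltn_trans (ltnSn 0) hk)), (Ordinal hk).
  by move=> /(f_equal (@nat_of_ord _)).
Qed.

Theorem theoremA (k : nat) (hk : (2 <= k)%nat) :
  dense (fun x : Sigma k => Rec x /\ ~ BR x) /\
  exists D : Sigma k -> Prop,
    (forall x, D x -> Rec x /\ ~ BR x) /\ uncountable D /\ DC1_scrambled D.
Proof.
  have [zero [one zero_neq_one]] := exists_two_symbols hk.
  split.
    move=> x eps heps; have [T hT] := exists_inv_pow2_lt eps heps.
    exists (coded zero one T x (fun _ => false)); split; first exact: coded_Rec_not_BR.
    exact: Rle_lt_trans (dist_coded_le _ _ _ _ _) hT.
  pose f := coded zero one 0 (fun _ => zero).
  have f_inj : injective f := coded_inj _ _ zero_neq_one _ _.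
  exists (fun x => exists z, x = f z); split; last split.
  - by move=> _ [z ->]; apply: coded_Rec_not_BR.
  - exact: uncountable_inj_image.
  split.
    exists (f (fun _ => false)), (f (fun _ => true)); split; first by eexists.
    by split; [eexists | move/f_inj/(congr1 (fun z => z 0%N))].
  move=> _ _ [z1 ->] [z2 ->] hneq; apply: coded_DC1 => // hz.
  by apply: hneq; rewrite hz.
Qed.
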